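(* Let $d>0$, let $\mathcal{S}$ be the 4-PAM constellation labeled by any Gray labeling $\Phi_{\mathcal{S}}$, and let $\mathcal{B}\subset\{0,1\}^{2N}$ be any binary linear code with at least two codewords. Then $\mathsf{L}(\mathcal{B})\le 1.25$ dB. Moreover, there exist a Gray labeling and a binary linear code $\mathcal{B}$ for which this bound is attained, i.e., $\mathsf{L}(\mathcal{B})=20\log_{10}(2/\sqrt{3})\approx 1.25$ dB.
   Context: $\mathcal{S}=\{s_1,s_2,s_3,s_4\}$ with $s_1=-3d$, $s_2=-d$, $s_3=d$, $s_4=3d$. A labeling is a bijection $\Phi_{\mathcal{S}}:\{0,1\}^2\to\mathcal{S}$, described by $\boldsymbol{q}=[q_1,\dots,q_4]$ where $q_i$ is the integer whose two-bit representation (most significant bit first) is $\Phi_{\mathcal{S}}^{-1}(s_i)$; the Gray labelings are $[0,1,3,2]$, $[0,2,3,1]$, $[1,0,2,3]$, $[2,0,1,3]$. A codeword of $\mathcal{B}$ is written $\boldsymbol{b}=[\boldsymbol{b}[1],\dots,\boldsymbol{b}[N]]$ with $\boldsymbol{b}[k]=[b_1[k],b_2[k]]$, and the CM code is $\mathcal{X}=\{[\Phi_{\mathcal{S}}(\boldsymbol{b}[1]),\dots,\Phi_{\mathcal{S}}(\boldsymbol{b}[N])]:\boldsymbol{b}\in\mathcal{B}\}$. For $\boldsymbol{x},\hat{\boldsymbol{x}}\in\mathcal{S}^N$ and each $k$ with $x[k]\neq\hat{x}[k]$: $\mu^{\mathcal{X}}_k=\sigma^{2,\mathcal{X}}_k=(x[k]-\hat{x}[k])^2/(4d^2)$;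 $\mu^{\mathcal{B}}_k=\sigma^{2,\mathcal{B}}_k=(x[k]-\hat{x}[k])^2/(4d^2)$ except that if $\{x[k],\hat{x}[k]\}=\{s_1,s_4\}$ then $\mu^{\mathcal{B}}_k=3$, $\sigma^{2,\mathcal{B}}_k=1$. Summing over $k$ with $x[k]\neq\hat{x}[k]$, $a^{\mathcal{X}}(\boldsymbol{x},\hat{\boldsymbol{x}})=\sum_k\mu^{\mathcal{X}}_k/\sqrt{\sum_k\sigma^{2,\mathcal{X}}_k}$ and $a^{\mathcal{B}}(\boldsymbol{x},\hat{\boldsymbol{x}})=\sum_k\mu^{\mathcal{B}}_k/\sqrt{\sum_k\sigma^{2,\mathcal{B}}_k}$ (normalized distances of the symbol-wise ML decoder and of the bit-wise max-log decoder under the zero-crossing approximation). The asymptotic loss of the code is $\mathsf{L}(\mathcal{B})=20\log_{10}\Big(\min_{\boldsymbol{x}\neq\hat{\boldsymbol{x}}\in\mathcal{X}}a^{\mathcal{X}}(\boldsymbol{x},\hat{\boldsymbol{x}})\big/\min_{\boldsymbol{x}\neq\hat{\boldsymbol{x}}\in\mathcal{X}}a^{\mathcal{B}}(\boldsymbol{x},\hat{\boldsymbol{x}})\Big)$ dB. *)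

From HB Require Import structures.
From mathcomp Require Import all_boot all_order all_algebra.
From mathcomp Require Import all_classical all_reals all_analysis.
Set Implicit Arguments. Unset Strict Implicit. Unset Printing Implicit Defensive.
Import Order.TTheory GRing.Theory Num.Theory.
Local Open Scope ring_scope.
Local Open Scope classical_set_scope.

(* 4-PAM constellation, 0-indexed: sym d i = s_(i+1), i.e. -3d, -d, d, 3d
   for i = 0,1,2,3. *)
Definition sym (R : realType) (d : R) (i : nat) : R := (2 * i%:R - 3) * d.

(* A labeling is described by q = [q_1;..;q_4] (a seq of naturals), where q_i
   is the integer whose 2-bit representation (MSB first) is Phi^{-1}(s_i).
   The Gray labelings are the four listed ones. *)
Definition gray_labelings : seq (seq nat) :=
  [:: [:: 0; 1; 3; 2]; [:: 0; 2; 3; 1]; [:: 1; 0; 2; 3]; [:: 2; 0; 1; 3]]%N.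
Definition gray (q : seq nat) : bool := q \in gray_labelings.

Definition Phi (R : realType) (d : R) (q : seq nat) (b1 b2 : 'F_2) : R :=
  sym d (index (2 * (b1 : nat) + (b2 : nat))%N q).

(* A binary codeword of length 2N is a row vector over F_2 of length N*2; its
   k-th bit pair b[k] = [b1[k], b2[k]] consists of the bits at positions
   2k and 2k+1 (0-indexed), i.e. entries (k,0),(k,1) of vec_mx b. *)
Definition bitword (N : nat) := 'rV['F_2]_(N * 2).

Definition linear_code (N : nat) (B : {set bitword N}) : bool :=
  (0 \in B) && [forall u in B, forall v in B, u + v \in B].

Definition modulate (R : realType) (d : R) (q : seq nat) (N : nat)
  (b : bitword N) : 'I_N -> R :=
  fun k => Phi d q (@vec_mx 'F_2 N 2 b k ord0) (@vec_mx 'F_2 N 2 b k 1).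

Definition CMcode (R : realType) (d : R) (q : seq nat) (N : nat)
  (B : {set bitword N}) : set ('I_N -> R) :=
  [set modulate d q b | b in [set b | b \in B]].

Definition sqd (R : realType) (d x y : R) : R := (x - y) ^+ 2 / (4 * d ^+ 2).

Definition is_s1s4 (R : realType) (d x y : R) : bool :=
  ((x == - (3 * d)) && (y == 3 * d)) || ((x == 3 * d) && (y == - (3 * d))).

Definition muB (R : realType) (d x y : R) : R :=
  if is_s1s4 d x y then 3 else sqd d x y.
Definition sigB (R : realType) (d x y : R) : R :=
  if is_s1s4 d x y then 1 else sqd d x y.

Definition aX (R : realType) (d : R) (N : nat) (x xh : 'I_N -> R) : R :=
  (\sum_(k < N | x k != xh k) sqd d (x k) (xh k))
  / Num.sqrt (\sum_(k < N | x k != xh k) sqd d (x k) (xh k)).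
Definition aB (R : realType) (d : R) (N : nat) (x xh : 'I_N -> R) : R :=
  (\sum_(k < N | x k != xh k) muB d (x k) (xh k))
  / Num.sqrt (\sum_(k < N | x k != xh k) sigB d (x k) (xh k)).

(* minimum over pairs of distinct codewords of X (finite nonempty set, so the
   infimum is the minimum) *)
Definition min_pairs (R : realType) (N : nat) (X : set ('I_N -> R))
  (a : ('I_N -> R) -> ('I_N -> R) -> R) : R :=
  inf [set r | exists x xh, [/\ X x, X xh, x <> xh & r = a x xh]].

Definition log10 (R : realType) (x : R) : R := ln x / ln 10.

Definition loss (R : realType) (d : R) (q : seq nat) (N : nat)
  (B : {set bitword N}) : R :=
  20 * log10 (min_pairs (CMcode d q B) (@aX R d N) / min_pairs (CMcode d q B) (@aB R d N)).

From HB Require Import structures.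
From mathcomp Require Import all_boot all_order all_algebra.
From mathcomp Require Import all_classical all_reals all_analysis.
From mathcomp Require Import ring lra.
Set Implicit Arguments. Unset Strict Implicit. Unset Printing Implicit Defensive.
Import Order.TTheory GRing.Theory Num.Theory.
Local Open Scope ring_scope.
Local Open Scope classical_set_scope.

(* The bound already holds pair by pair, for any labeling and any set of
   words.  For fixed x <> xh let M be the sum of the mu^B and T the number of
   positions where {x[k], xh[k]} = {s1, s4}.  Then the sums of the sigma^X and
   of the sigma^B are M + 6T and M - 2T, so that a^X = sqrt (M + 6T) and
   a^B = M / sqrt (M - 2T), and the identity
       3 (M + 6T) (M - 2T) = 4 M^2 - (M - 6T)^2
   gives sqrt 3 a^X <= 2 a^B; the same inequality passes to the minima.
   Equality needs M = 6T: with the Gray labeling [0,1,3,2] the two-word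
   linear code {0, b}, b = (10 01 01 01), is modulated to (s1,s1,s1,s1) and
   (s4,s2,s2,s2), where M = 6 and T = 1. *)

Section PairwiseBound.
Variables (R : realType) (d : R).
Hypothesis d_gt0 : 0 < d.

Lemma sqd_ge0 x y : 0 <= sqd d x y.
Proof. by rewrite /sqd divr_ge0 ?sqr_ge0 // mulr_ge0 // sqr_ge0. Qed.

Lemma sqd_gt0 x y : x != y -> 0 < sqd d x y.
Proof.
move=> neq_xy; rewrite /sqd divr_gt0 ?exprn_even_gt0 ?subr_eq0 //.
by rewrite mulr_gt0 // exprn_gt0.
Qed.

Lemma muB_ge0 x y : 0 <= muB d x y.
Proof. by rewrite /muB; case: ifP => _ //; exact: sqd_ge0. Qed.

Lemma sigB_gt0 x y : x != y -> 0 < sigB d x y.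
Proof. by rewrite /sigB; case: ifP => // _; exact: sqd_gt0. Qed.

Lemma sqd_muB x y : sqd d x y = muB d x y + 6 * (is_s1s4 d x y)%:R.
Proof.
rewrite /muB; case: ifP => s14; last by rewrite mulr0 addr0.
have d_neq0 : d != 0 by rewrite gt_eqF.
rewrite /sqd mulr1; case/orP: s14 => /andP[/eqP -> /eqP ->]; field=> //.
Qed.

Lemma sigB_muB x y : sigB d x y = muB d x y - 2 * (is_s1s4 d x y)%:R.
Proof. by rewrite /muB /sigB; case: ifP => _ /=; lra. Qed.

Lemma sqrt3_sqrt_le (M T : R) : 0 <= T -> 0 < M - 2 * T ->
  Num.sqrt (M + 6 * T) * Num.sqrt 3 <= 2 * (M / Num.sqrt (M - 2 * T)).
Proof.
move=> T_ge0 MT_gt0.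
have sqrt_gt0 : 0 < Num.sqrt (M - 2 * T) by rewrite sqrtr_gt0.
rewrite mulrA ler_pdivlMr // -!sqrtrM ?(addr_ge0, mulr_ge0) //; try lra.
rewrite -[2 * M]ger0_norm -?sqrtr_sqr; last lra.
rewrite ler_sqrt; last by rewrite sqr_ge0.
have := sqr_ge0 (M - 6 * T); nra.
Qed.

Lemma aX_sqrt3_le_aB N (x xh : 'I_N -> R) : x <> xh ->
  aX d x xh * Num.sqrt 3 <= 2 * aB d x xh.
Proof.
move=> neq_x; have [k0 xk0] : exists k, x k != xh k.
  apply/existsP; apply: contraT; rewrite negb_exists => /forallP eq_x.
  by case: neq_x; apply: funext => k; apply/eqP; rewrite -[_ == _]negbK eq_x.
rewrite /aX /aB.
set M := \sum_(k < N | x k != xh k) muB d (x k) (xh k).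
set T := \sum_(k < N | x k != xh k) (is_s1s4 d (x k) (xh k))%:R : R.
have sumX : \sum_(k < N | x k != xh k) sqd d (x k) (xh k) = M + 6 * T.
  by rewrite mulr_sumr -big_split; apply: eq_bigr => k _; rewrite sqd_muB.
have sumB : \sum_(k < N | x k != xh k) sigB d (x k) (xh k) = M - 2 * T.
  by rewrite mulr_sumr -sumrB; apply: eq_bigr => k _; rewrite sigB_muB.
have T_ge0 : 0 <= T by rewrite sumr_ge0.
have MT_gt0 : 0 < M - 2 * T.
  rewrite -sumB (bigD1 k0) //= ltr_pwDl ?sigB_gt0 // sumr_ge0 // => k /andP[xk _].
  exact: ltW (sigB_gt0 xk).
rewrite sumX sumB.
have sqrt_gt0 : 0 < Num.sqrt (M + 6 * T) by rewrite sqrtr_gt0; lra.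
have -> : (M + 6 * T) / Num.sqrt (M + 6 * T) = Num.sqrt (M + 6 * T).
  by rewrite -{1}[M + 6 * T]sqr_sqrtr ?expr2 ?mulfK ?gt_eqF //; lra.
exact: sqrt3_sqrt_le.
Qed.

Lemma aX_ge0 N (x xh : 'I_N -> R) : 0 <= aX d x xh.
Proof. by rewrite divr_ge0 ?sqrtr_ge0 ?sumr_ge0 // => k _; exact: sqd_ge0. Qed.

Lemma aB_ge0 N (x xh : 'I_N -> R) : 0 <= aB d x xh.
Proof. by rewrite divr_ge0 ?sqrtr_ge0 ?sumr_ge0 // => k _; exact: muB_ge0. Qed.

End PairwiseBound.

Section MinPairs.
Variables (R : realType) (N : nat) (X : set ('I_N -> R)).

Let pairs (a : ('I_N -> R) -> ('I_N -> R) -> R) : set R :=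
  [set r | exists x xh, [/\ X x, X xh, x <> xh & r = a x xh]].

Lemma min_pairs_ge0 a : (forall x xh, 0 <= a x xh) -> 0 <= min_pairs X a.
Proof.
move=> a_ge0; rewrite /min_pairs -/(pairs a).
have [->|ne] := eqVneq (pairs a) set0; first by rewrite inf0.
by apply: lb_le_inf; [exact/set0P | move=> _ [x [xh [_ _ _ ->]]]].
Qed.

Lemma min_pairs_scale_le (a b : ('I_N -> R) -> ('I_N -> R) -> R) (c e : R) :
  0 <= c -> 0 < e -> (forall x xh, 0 <= a x xh) ->
  (forall x xh, x <> xh -> a x xh * c <= e * b x xh) ->
  min_pairs X a * c <= e * min_pairs X b.
Proof.
move=> c_ge0 e_gt0 a_ge0 ab_le; rewrite /min_pairs -/(pairs a) -/(pairs b).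
have [eb|ne] := eqVneq (pairs b) set0.
  have -> : pairs a = set0.
    apply/seteqP; split => // r [x [xh [Xx Xxh neq_x _]]].
    have : pairs b (b x xh) by exists x, xh.
    by rewrite eb.
  by rewrite eb inf0 mul0r mulr0.
rewrite -ler_pdivrMl //; apply: lb_le_inf; first exact/set0P.
move=> _ [x [xh [Xx Xxh neq_x ->]]]; rewrite ler_pdivrMl //.
apply: le_trans (ab_le _ _ neq_x); rewrite ler_wpM2r //.
apply: ge_inf; last by exists x, xh.
by exists 0 => _ [y [yh [_ _ _ ->]]].
Qed.

Lemma min_pairs_two x y (a : ('I_N -> R) -> ('I_N -> R) -> R) :
  (forall z, X z <-> z = x \/ z = y) -> x <> y -> (forall u v, a u v = a v u) ->
  min_pairs X a = a x y.
Proof.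
move=> XE neq_xy a_sym; rewrite /min_pairs.
suff -> : [set r | exists u v, [/\ X u, X v, u <> v & r = a u v]] = [set a x y].
  exact: inf1.
apply/seteqP; split => [r [u [v [/XE Xu /XE Xv neq_uv ->]]] | _ ->] /=.
  by case: Xu Xv neq_uv => -> [] -> neq; rewrite // a_sym.
by exists x, y; split => //; apply/XE; [left | right].
Qed.

End MinPairs.

Lemma log10_le (R : realType) (x y : R) : 1 <= y -> x <= y -> log10 x <= log10 y.
Proof.
move=> y_ge1 le_xy; rewrite /log10 ler_pM2r ?invr_gt0 ?ln_gt0 ?ltr1n //.
have [x_le0|x_gt0] := leP x 0; first by rewrite ln0 // ln_ge0.
by rewrite ler_ln ?posrE // (lt_le_trans x_gt0).
Qed.

Lemma sqrt3_lt2 (R : realType) : Num.sqrt 3 < 2 :> R.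
Proof. by have := sqrtr_ge0 (3 : R); have := sqr_sqrtr (ler0n R 3); nra. Qed.

Lemma loss_le (R : realType) (d : R) (q : seq nat) (N : nat) (B : {set bitword N}) :
  0 < d -> loss d q B <= 20 * log10 (2 / Num.sqrt 3).
Proof.
move=> d_gt0; rewrite /loss; set X := CMcode d q B.
have s3_gt0 : 0 < Num.sqrt 3 :> R by rewrite sqrtr_gt0.
rewrite ler_pM2l // log10_le //; first by rewrite ler_pdivlMr ?mul1r ?ltW ?sqrt3_lt2.
have mB_ge0 : 0 <= min_pairs X (@aB R d N) by apply: min_pairs_ge0 => *; exact: aB_ge0.
have [->|mB_neq0] := eqVneq (min_pairs X (@aB R d N)) 0.
  by rewrite invr0 mulr0 divr_ge0 ?ltW.
have mB_gt0 : 0 < min_pairs X (@aB R d N) by rewrite lt_neqAle eq_sym mB_neq0.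
have key : min_pairs X (@aX R d N) * Num.sqrt 3 <= 2 * min_pairs X (@aB R d N).
  apply: min_pairs_scale_le; [exact: sqrtr_ge0 | by [] | exact: aX_ge0 |].
  by move=> x xh; exact: aX_sqrt3_le_aB.
by rewrite ler_pdivlMr // mulrAC ler_pdivrMr.
Qed.

Lemma F2mx_addrr m n (A : 'M['F_2]_(m, n)) : A + A = 0.
Proof.
by apply/matrixP => i j; rewrite !mxE (addrr_pchar2 (pchar_Fp (isT : prime 2))).
Qed.

Lemma linear_code_set2 N (u : bitword N) : linear_code [set 0; u].
Proof.
rewrite /linear_code in_set2 eqxx /=.
apply/forallP => v; apply/implyP; rewrite in_set2 => /orP[]/eqP->;
apply/forallP => w; apply/implyP; rewrite in_set2 => /orP[]/eqP->;
by rewrite ?add0r ?addr0 ?F2mx_addrr in_set2 eqxx ?orbT.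
Qed.

Section Symmetry.
Variables (R : realType) (d : R) (N : nat).

Lemma sum_diff_sym (F : R -> R -> R) (x y : 'I_N -> R) :
  (forall u v, F u v = F v u) ->
  \sum_(k < N | x k != y k) F (x k) (y k) = \sum_(k < N | y k != x k) F (y k) (x k).
Proof. by move=> F_sym; apply: eq_big => [k|k _]; [rewrite eq_sym | exact: F_sym]. Qed.

Lemma sqd_sym u v : sqd d u v = sqd d v u.
Proof. by rewrite /sqd -opprB sqrrN. Qed.

Lemma is_s1s4_sym u v : is_s1s4 d u v = is_s1s4 d v u.
Proof. by rewrite /is_s1s4 orbC; congr (_ || _); exact: andbC. Qed.

Lemma aX_sym (x y : 'I_N -> R) : aX d x y = aX d y x.
Proof. by rewrite /aX; congr (_ / Num.sqrt _); apply: sum_diff_sym; exact: sqd_sym. Qed.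

Lemma muB_sym u v : muB d u v = muB d v u.
Proof. by rewrite /muB is_s1s4_sym sqd_sym. Qed.

Lemma sigB_sym u v : sigB d u v = sigB d v u.
Proof. by rewrite /sigB is_s1s4_sym sqd_sym. Qed.

Lemma aB_sym (x y : 'I_N -> R) : aB d x y = aB d y x.
Proof.
rewrite /aB; congr (_ / Num.sqrt _); apply: sum_diff_sym.
- exact: muB_sym.
- exact: sigB_sym.
Qed.

End Symmetry.

Definition q_ex : seq nat := [:: 0; 1; 3; 2]%N.

Definition b_ex : bitword 4 :=
  mxvec (\matrix_(k < 4, j < 2) (if k == 0 :> nat then j == 0 :> nat else j == 1 :> nat)%:R).

Definition B_ex : {set bitword 4} := [set 0; b_ex]%SET.

Lemma b_ex_neq0 : b_ex != 0.
Proof.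
apply/eqP => /(congr1 (fun b => vec_mx b ord0 ord0)).
by rewrite mxvecK linear0 !mxE.
Qed.

Section Attained.
Variables (R : realType) (d : R).
Hypothesis d_gt0 : 0 < d.

Lemma modulate0 k : modulate d q_ex (0 : bitword 4) k = - (3 * d).
Proof. by rewrite /modulate linear0 !mxE /Phi /= /sym; lra. Qed.

Lemma modulate_b_ex k : modulate d q_ex b_ex k = if k == 0 :> nat then 3 * d else - d.
Proof.
rewrite /modulate mxvecK !mxE /Phi.
by case: k => [[|[|[|[|k]]]] lt_k4] //=; rewrite /sym; lra.
Qed.

Let x0 := modulate d q_ex (0 : bitword 4).
Let x1 := modulate d q_ex b_ex.

Lemma modulate_ex_neq k : x0 k != x1 k.
Proof.
(* lra ignores section hypotheses, hence the explicit [have := d_gt0]. *)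
rewrite /x0 /x1 modulate0 modulate_b_ex.
by case: ifP => _; apply/eqP => e; have := d_gt0; lra.
Qed.

Lemma sqd_ex k : sqd d (x0 k) (x1 k) = if k == 0 :> nat then 9 else 1.
Proof.
have d_neq0 : d != 0 by rewrite gt_eqF.
by rewrite /x0 /x1 modulate0 modulate_b_ex /sqd; case: ifP => _; field.
Qed.

Lemma is_s1s4_ex k : is_s1s4 d (x0 k) (x1 k) = (k == 0 :> nat).
Proof.
rewrite /x0 /x1 modulate0 modulate_b_ex /is_s1s4; case: ifP => _; first by rewrite !eqxx.
by apply/negP => /orP[] /andP[/eqP e1 /eqP e2]; have := d_gt0; lra.
Qed.

Lemma sum_ex_diff (F : 'I_4 -> R) :
  \sum_(k < 4 | x0 k != x1 k) F k = \sum_(k < 4) F k.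
Proof. exact: eq_bigl modulate_ex_neq. Qed.

Lemma aX_ex : aX d x0 x1 = 12 / Num.sqrt 12.
Proof.
rewrite /aX sum_ex_diff (eq_bigr _ (fun k _ => sqd_ex k)) !big_ord_recr big_ord0 /=.
by rewrite (_ : 0 + 9 + 1 + 1 + 1 = 12 :> R) //; lra.
Qed.

Lemma muB_ex k : muB d (x0 k) (x1 k) = if k == 0 :> nat then 3 else 1.
Proof. by rewrite /muB is_s1s4_ex sqd_ex; case: (k == 0 :> nat). Qed.

Lemma sigB_ex k : sigB d (x0 k) (x1 k) = 1.
Proof. by rewrite /sigB is_s1s4_ex sqd_ex; case: (k == 0 :> nat). Qed.

Lemma aB_ex : aB d x0 x1 = 6 / Num.sqrt 4.
Proof.
rewrite /aB !sum_ex_diff (eq_bigr _ (fun k _ => muB_ex k)).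
rewrite (eq_bigr _ (fun k _ => sigB_ex k)) !big_ord_recr !big_ord0 /=.
by rewrite (_ : 0 + 3 + 1 + 1 + 1 = 6 :> R) 1?(_ : 0 + 1 + 1 + 1 + 1 = 4 :> R) //; lra.
Qed.

Lemma CMcode_ex z : CMcode d q_ex B_ex z <-> z = x0 \/ z = x1.
Proof.
split => [[b Bb <-] | [->|->]].
- by move: Bb; rewrite /= in_set2 => /orP[] /eqP ->; [left | right].
- by exists 0; rewrite //= in_set2 eqxx.
- by exists b_ex; rewrite //= in_set2 eqxx orbT.
Qed.

Lemma loss_ex : loss d q_ex B_ex = 20 * log10 (2 / Num.sqrt 3).
Proof.
have x01_neq : x0 <> x1 by move/(congr1 (fun x => x ord0)); apply/eqP/modulate_ex_neq.
rewrite /loss (min_pairs_two CMcode_ex x01_neq (@aX_sym R d 4)).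
rewrite (min_pairs_two CMcode_ex x01_neq (@aB_sym R d 4)) aX_ex aB_ex.
have sqrt4 : Num.sqrt 4 = 2 :> R.
  by rewrite (_ : 4 = 2 ^+ 2) ?sqrtr_sqr ?gtr0_norm // expr2 -natrM.
have -> : Num.sqrt 12 = 2 * Num.sqrt 3 :> R.
  by rewrite -sqrt4 -sqrtrM // -natrM.
rewrite sqrt4.
have sqrt3_gt0 : 0 < Num.sqrt 3 :> R by rewrite sqrtr_gt0.
by congr (_ * log10 _); field; rewrite gt_eqF.
Qed.

End Attained.

Theorem corollary1 (R : realType) (d : R) (hd : 0 < d) :
  (forall (q : seq nat) (N : nat) (B : {set bitword N}),
      gray q -> linear_code B -> (1 < #|B|)%N ->
      loss d q B <= 20 * log10 (2 / Num.sqrt 3))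
  /\
  (exists (q : seq nat) (N : nat) (B : {set bitword N}),
      [/\ gray q, linear_code B, (1 < #|B|)%N &
          loss d q B = 20 * log10 (2 / Num.sqrt 3)]).
Proof.
split=> [q N B _ _ _ | ]; first exact: loss_le.
exists q_ex, 4%N, B_ex; split.
- by [].
- exact: linear_code_set2.
- by rewrite cards2 eq_sym b_ex_neq0.
- exact: loss_ex.
Qed.
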